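(* Let $\theta:(0,\infty)\to\mathbb{R}$ satisfy $0<\theta(x)\le 2\arctan(x/2)$ for all $x>0$. Let $\Lambda\ge0$, $m>0$, $\Delta t>0$ with $\Delta t^2\Lambda/m<4$, let $n\ge1$ be an integer, $m_n=m/n$, $\beta>0$, and $\omega>0$. Put $\vartheta=\theta(\omega\Delta t)$ and $$A=\cos\vartheta-\frac{\Delta t^2(\Lambda/m)}{2}\frac{\sin\vartheta}{\omega\Delta t}.$$ Define the $2\times2$ real matrices $$S^{1/2}=\begin{bmatrix}\cos(\vartheta/2)&\sin(\vartheta/2)/\omega\\-\omega\sin(\vartheta/2)&\cos(\vartheta/2)\end{bmatrix},\qquad B^{1/2}=\begin{bmatrix}1&0\\-\Delta t(\Lambda/m)/2&1\end{bmatrix},$$ $$M=B^{1/2}S^{1/2}\begin{bmatrix}1&0\\0&0\end{bmatrix}S^{1/2}B^{1/2},\qquad R=\frac{1}{\beta m_n}B^{1/2}S^{1/2}\begin{bmatrix}0&0\\0&1\end{bmatrix}(B^{1/2}S^{1/2})^{\mathrm T},$$ and consider the Markov chain on $\mathbb{R}^2$ $$\begin{bmatrix}\varrho^{(k)}\\\varphi^{(k)}\end{bmatrix}=M\begin{bmatrix}\varrho^{(k-1)}\\\varphi^{(k-1)}\end{bmatrix}+R^{1/2}\begin{bmatrix}\xi^{(k-1)}\\\eta^{(k-1)}\end{bmatrix},\quad k\ge1,$$ where all $\xi^{(k)},\eta^{(k)}$ are independent standard normal random variables independent of the initial condition. For a probability distribution $\mu$ on $\mathbb{R}$, let $\mu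 p^k$ denote the law of $\varrho^{(k)}$ when $\varrho^{(0)}\sim\mu$ and, independently, $\varphi^{(0)}\sim\mathcal N(0,(\beta m_n)^{-1})$. Then for all integers $k>1$ and all probability distributions $\mu,\nu$ on $\mathbb{R}$, $$\mathcal W_2(\mu p^k,\nu p^k)\le\begin{cases}A^{k-1}\,\mathcal W_2(\mu,\nu)&\text{if }A>0,\\[2pt] \dfrac12\,\dfrac1{k-1}\,\mathcal W_2(\mu,\nu)&\text{otherwise.}\end{cases}$$
   Context: For probability distributions $\mu,\nu$ on $\mathbb{R}$, the $2$-Wasserstein distance is $\mathcal W_2(\mu,\nu)=\big(\inf\mathbb E|X-Y|^2\big)^{1/2}$, the infimum over all couplings $(X,Y)$ with $X\sim\mu$, $Y\sim\nu$ (possibly $+\infty$). $R^{1/2}$ denotes a matrix square root of the positive semidefinite matrix $R$. This chain is the infinite-friction limit of a BAOAB-type thermostatted ring-polymer integrator for one normal mode of frequency $\omega$ in the harmonic potential $V(q)=(\Lambda/2)q^2$. *)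

From HB Require Import structures.
From mathcomp Require Import all_boot all_order all_algebra.
From mathcomp Require Import all_classical all_reals all_analysis.
Set Implicit Arguments. Unset Strict Implicit. Unset Printing Implicit Defensive.
Import Order.TTheory GRing.Theory Num.Theory.
Local Open Scope classical_set_scope.
Local Open Scope ring_scope.

Section Defs.
Variable R : realType.

Definition mx2 (a b c d : R) : 'M[R]_2 :=
  \matrix_(i < 2, j < 2)
    (if i == 0 :> nat then (if j == 0 :> nat then a else b)
     else (if j == 0 :> nat then c else d)).

Definition cv2 (x y : R) : 'cV[R]_2 :=
  \col_(i < 2) (if i == 0 :> nat then x else y).

Definition Shalf (th w : R) : 'M[R]_2 :=
  mx2 (cos (th / 2)) (sin (th / 2) / w) (- w * sin (th / 2)) (cos (th / 2)).

Definition Bhalf (dt lm : R) : 'M[R]_2 := mx2 1 0 (- (dt * lm) / 2) 1.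

Definition Mmat (th w dt lm : R) : 'M[R]_2 :=
  Bhalf dt lm *m Shalf th w *m mx2 1 0 0 0 *m Shalf th w *m Bhalf dt lm.

Definition Rmat (th w dt lm beta mn : R) : 'M[R]_2 :=
  (beta * mn)^-1 *: (Bhalf dt lm *m Shalf th w *m mx2 0 0 0 1
                     *m (Bhalf dt lm *m Shalf th w)^T).

Definition psd_sqrt (Q S : 'M[R]_2) : Prop :=
  Q^T = Q /\ (forall v : 'cV[R]_2, 0 <= (v^T *m Q *m v) 0 0) /\ Q *m Q = S.

Fixpoint chain (Mm Q : 'M[R]_2) (Omega : Type) (rho0 phi0 : Omega -> R)
    (xi eta : nat -> Omega -> R) (k : nat) (o : Omega) : 'cV[R]_2 :=
  match k with
  | 0 => cv2 (rho0 o) (phi0 o)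
  | k'.+1 => Mm *m chain Mm Q rho0 phi0 xi eta k' o + Q *m cv2 (xi k' o) (eta k' o)
  end.

(** Mutual independence of a family of real random variables: the product
    rule holds for every finite subfamily (given as a duplicate-free list). *)
Definition mutually_independent (d : measure_display) (Omega : measurableType d)
    (P : probability Omega R) (I : eqType) (X : I -> Omega -> R) : Prop :=
  forall (J : seq I) (A : I -> set R), uniq J ->
    (forall i, measurable (A i)) ->
    P (\bigcap_(i in [set i | i \in J]) (X i @^-1` A i)) =
    (\prod_(i <- J) P (X i @^-1` A i))%E.

(** Index of the random inputs: inl true = rho^(0), inl false = phi^(0),
    inr (true, j) = xi^(j), inr (false, j) = eta^(j). *)
Definition inputs (Omega : Type) (rho0 phi0 : Omega -> R) (xi eta : nat -> Omega -> R)
    (i : (bool + (bool * nat))%type) : Omega -> R :=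
  match i with
  | inl true => rho0 | inl false => phi0
  | inr (true, j) => xi j | inr (false, j) => eta j
  end.

Definition has_law (d : measure_display) (Omega : measurableType d)
    (P : probability Omega R) (X : Omega -> R) (mu : set R -> \bar R) : Prop :=
  measurable_fun setT X /\ forall A : set R, measurable A -> P (X @^-1` A) = mu A.

Definition chain_setup (d : measure_display) (Omega : measurableType d)
    (P : probability Omega R) (mu : set R -> \bar R) (s0 : R)
    (rho0 phi0 : Omega -> R) (xi eta : nat -> Omega -> R) : Prop :=
  [/\ has_law P rho0 mu, has_law P phi0 (normal_prob 0 s0),
      (forall j, has_law P (xi j) (normal_prob 0 1)),
      (forall j, has_law P (eta j) (normal_prob 0 1)) &
      mutually_independent P (inputs rho0 phi0 xi eta)].

Definition law_rho (Mm Q : 'M[R]_2) (d : measure_display) (Omega : measurableType d)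
    (P : probability Omega R) (rho0 phi0 : Omega -> R) (xi eta : nat -> Omega -> R)
    (k : nat) : set R -> \bar R :=
  pushforward P (fun o => chain Mm Q rho0 phi0 xi eta k o 0 0).

Definition coupling (mu nu : set R -> \bar R) (pi : probability (R * R)%type R) : Prop :=
  forall A : set R, measurable A ->
    pi (fst @^-1` A) = mu A /\ pi (snd @^-1` A) = nu A.

Definition W2sq (mu nu : set R -> \bar R) : \bar R :=
  ereal_inf [set (\int[pi]_z ((z.1 - z.2) ^+ 2)%:E)%E
            | pi in [set pi : probability (R * R)%type R | coupling mu nu pi]].

Definition W2 (mu nu : set R -> \bar R) : \bar R :=
  match W2sq mu nu with
  | EFin r => (Num.sqrt r)%:E
  | x => x
  end.

End Defs.

(* M has rank one: M = u v^T with u = B^{1/2} S^{1/2} e1 and v^T = e1^T S^{1/2} B^{1/2}, and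
   v^T u = A.  Hence the first coordinate of the chain is rho^(k) = a_k rho^(0) + Z_k, where
   a_k = A^(k-1) (1 + A) / 2 and Z_k is a fixed linear combination of phi^(0) and the noises.
   By mutual independence Z_k is independent of rho^(0), and its law is the same for both
   initial laws.  Feeding the same Z_k to both chains, started from a coupling of mu and nu,
   gives W2(mu p^k, nu p^k) <= |a_k| W2(mu, nu).
   Finally the step-size conditions give -1 <= A <= 1, so |a_k| <= A^(k-1) when A > 0, while
   for A <= 0 Bernoulli's inequality gives |a_k| <= 1 / (2 (k - 1)). *)

From HB Require Import structures.
From mathcomp Require Import all_boot all_order all_algebra.
From mathcomp Require Import all_classical all_reals all_analysis.
From mathcomp Require Import measurable_realfun ring lra.
Import Order.TTheory GRing.Theory Num.Theory.
Local Open Scope classical_set_scope.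
Local Open Scope ring_scope.
Set Implicit Arguments. Unset Strict Implicit. Unset Printing Implicit Defensive.

Local Notation law P mX := (distribution P (mfun_Sub (mem_set mX))).
Local Notation input := (bool + (bool * nat))%type.

(** * Rank-one structure of the transition matrix *)

Lemma rank_one_exprS (F : comNzRingType) (n : nat) (u : 'cV[F]_n) (v : 'rV[F]_n) k :
  (u *m v) ^+ k.+1 = ((v *m u) 0 0) ^+ k *: (u *m v).
Proof.
set a := (v *m u) 0 0.
have vuE : v *m u = a%:M by exact: mx11_scalar.
elim: k => [|k IH]; first by rewrite expr1 expr0 scale1r.
rewrite exprS IH -mulmxE -scalemxAr mulmxA -(mulmxA u) vuE.
by rewrite mul_mx_scalar -scalemxAl scalerA -exprSr.
Qed.

Lemma expr1B_mulD_le1 (R : realFieldType) (u : R) n : 0 <= u <= 1 ->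
  (1 - u) ^+ n * (1 + n%:R * u) <= 1.
Proof.
move=> /andP [u0 u1]; elim: n => [|n IH]; first by rewrite expr0 mul0r addr0 mulr1.
have p0 : 0 <= (1 - u) ^+ n by apply: exprn_ge0; lra.
rewrite exprSr -mulrA mulrS.
set p := (1 - u) ^+ n in IH p0 *; set x := n%:R in IH *.
have x0 : 0 <= x by [].
have h : 0 <= p * (x + 1) * (u * u) by rewrite mulr_ge0 ?mulr_ge0 ?mulr_ge0; lra.
nra.
Qed.

Definition contraction_rate (R : realFieldType) (A : R) (j : nat) : R :=
  if 0 < A then A ^+ j else 2^-1 * j%:R^-1.

Lemma contraction_rate_gt0 (R : realFieldType) (A : R) j :
  (0 < j)%N -> 0 < contraction_rate A j.
Proof.
rewrite /contraction_rate => j0; case: ifPn => [A0|_]; first exact: exprn_gt0.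
by rewrite mulr_gt0 // invr_gt0 ltr0n.
Qed.

(* For [A <= 0], Bernoulli's inequality at [1 + A] gives [j (-A)^j (1 + A) <= 1]. *)
Lemma contraction_rate_ge (R : realFieldType) (A : R) j : -1 <= A <= 1 -> (0 < j)%N ->
  `|A ^+ j * ((1 + A) / 2)| <= contraction_rate A j.
Proof.
move=> /andP [Am1 A1] j0; rewrite /contraction_rate normrM normrX.
have h0 : 0 <= (1 + A) / 2 by lra.
rewrite (ger0_norm h0); case: ifPn => [Apos|].
  by rewrite (gtr0_norm Apos) -[leRHS]mulr1 ler_wpM2l ?exprn_ge0 //; lra.
rewrite -leNgt => A0; rewrite (ler0_norm A0).
set u := - A; have u0 : 0 <= u ^+ j by rewrite exprn_ge0 // /u; lra.
have j0' : 0 < j%:R :> R by rewrite ltr0n.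
have hb : u ^+ j * (1 + j%:R * (1 + A)) <= 1.
  by have := @expr1B_mulD_le1 _ (1 + A) j; rewrite (_ : 1 - (1 + A) = u); [apply; lra|rewrite /u; ring].
rewrite ler_pdivlMr //.
have : u ^+ j * ((1 + A) * j%:R) <= u ^+ j * (1 + j%:R * (1 + A)) by rewrite ler_wpM2l //; nra.
nra.
Qed.

Section TwoByTwo.
Variable R : realType.

Lemma mx2_mul (a b c d a' b' c' d' : R) :
  mx2 a b c d *m mx2 a' b' c' d' =
  mx2 (a * a' + b * c') (a * b' + b * d') (c * a' + d * c') (c * b' + d * d').
Proof.
apply/matrixP => i j; rewrite !mxE !big_ord_recl big_ord0 !mxE /=.
by case: i => [[|[|i]] Hi] //; case: j => [[|[|j]] Hj] //=; rewrite addr0.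
Qed.

Lemma mul_cv2_tr (a b c d : R) : cv2 a b *m (cv2 c d)^T = mx2 (a * c) (a * d) (b * c) (b * d).
Proof.
apply/matrixP => i j; rewrite !mxE big_ord1 !mxE.
by case: i => [[|[|i]] Hi] //; case: j => [[|[|j]] Hj].
Qed.

Lemma tr_cv2_mul00 (a b c d : R) : ((cv2 a b)^T *m cv2 c d) 0 0 = a * c + b * d.
Proof. by rewrite !mxE !big_ord_recl big_ord0 !mxE /= addr0. Qed.

Lemma mx2_cv2_00 (a b c d x y : R) : (mx2 a b c d *m cv2 x y) 0 0 = a * x + b * y.
Proof. by rewrite !mxE !big_ord_recl big_ord0 !mxE /= addr0. Qed.

End TwoByTwo.

Lemma tan_le_of_le_atan (R : realType) (x y : R) :
  - (pi / 2) < x -> x <= atan y -> tan x <= y.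
Proof.
move=> x_gt xy; have [/andP [ya yb] tanK] := atan_def y.
rewrite -[leRHS]tanK leNgt ltr_tan ?in_itv /= ?ya ?yb ?x_gt -?leNgt //.
by apply: le_lt_trans yb.
Qed.

Section RankOne.
Variables (R : realType) (th w dt lm : R).
Let c := cos (th / 2).
Let s := sin (th / 2).

Definition Acoef := cos th - dt ^+ 2 * lm / 2 * (sin th / (w * dt)).

(* [Mcol = B^{1/2} S^{1/2} e1] and [Mrow = e1^T S^{1/2} B^{1/2}]. *)
Definition Mcol : 'cV[R]_2 := cv2 c (- (dt * lm / 2) * c - w * s).
Definition Mrow : 'rV[R]_2 := (cv2 (c - dt * lm / 2 * s / w) (s / w))^T.

Lemma Mmat_rank_one : Mmat th w dt lm = Mcol *m Mrow.
Proof. by rewrite /Mmat /Bhalf /Shalf !mx2_mul mul_cv2_tr /c /s; congr mx2; ring. Qed.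

Hypotheses (w0 : w != 0) (dt0 : dt != 0).

Lemma Mrow_Mcol : (Mrow *m Mcol) 0 0 = Acoef.
Proof.
have thE : th = th / 2 + th / 2 by rewrite -splitr.
rewrite tr_cv2_mul00 /Acoef {1 2}thE cosD sinD -/c -/s.
by field; rewrite w0 dt0.
Qed.

Lemma Mcol_Mrow00 : (1 + Acoef) / 2 = c * (c - dt * lm / 2 * s / w).
Proof.
have cs1 : c ^+ 2 + s ^+ 2 = 1 := cos2Dsin2 (th / 2).
rewrite -Mrow_Mcol tr_cv2_mul00; apply/eqP; rewrite -subr_eq0; apply/eqP.
transitivity ((1 - (c ^+ 2 + s ^+ 2)) / 2); first by field; rewrite w0.
by rewrite cs1 subrr mul0r.
Qed.

Lemma Mmat_exprS_e1 k :
  (Mmat th w dt lm ^+ k.+1 *m cv2 1 0) 0 0 = Acoef ^+ k * ((1 + Acoef) / 2).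
Proof.
rewrite Mmat_rank_one rank_one_exprS Mrow_Mcol -scalemxAl mxE Mcol_Mrow00.
by rewrite /Mcol /Mrow mul_cv2_tr mx2_cv2_00 mulr1 mulr0 addr0.
Qed.

End RankOne.

Section AcoefBounds.
Variables (R : realType) (th w dt lm : R).

Lemma half_angle_bounds : 0 < th -> th <= 2 * atan (w * dt / 2) ->
  [/\ 0 < cos (th / 2), 0 < sin (th / 2) & sin (th / 2) <= w * dt / 2 * cos (th / 2)].
Proof.
move=> th0 th_atan; have pi0 : 0 < pi :> R := pi_gt0 R.
have atan_lt := atan_ltpi2 (w * dt / 2).
have c0 : 0 < cos (th / 2) by apply: cos_gt0_pihalf; apply/andP; split; lra.
split => //; first by apply: sin_gt0_pihalf; apply/andP; split; lra.
by rewrite -ler_pdivrMr // tan_le_of_le_atan //; lra.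
Qed.

Lemma Acoef_bounds : 0 < th -> th <= 2 * atan (w * dt / 2) ->
  0 <= lm -> 0 < dt -> 0 < w -> dt ^+ 2 * lm < 4 -> -1 <= Acoef th w dt lm <= 1.
Proof.
move=> th0 th_atan lm0 dt0 w0 hstab.
have [c0 s0 sc] := half_angle_bounds th0 th_atan.
set c := cos (th / 2) in c0 sc *; set s := sin (th / 2) in s0 sc *.
suff : 0 <= c * (c - dt * lm / 2 * s / w) <= 1 by rewrite -Mcol_Mrow00 ?gt_eqF //; lra.
have hs : 0 <= dt * lm / 2 * s / w by rewrite divr_ge0 ?mulr_ge0 //; lra.
have c1 : c ^+ 2 <= 1 by have := cos2Dsin2 (th / 2); have := sqr_ge0 s; rewrite -/c -/s; lra.
apply/andP; split; last by rewrite expr2 in c1; nra.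
rewrite mulr_ge0 ?subr_ge0 ?ler_pdivrMr //; first lra.
have : dt * lm / 2 * s <= dt * lm / 2 * (w * dt / 2 * c) by rewrite ler_wpM2l ?mulr_ge0 //; lra.
have -> : dt * lm / 2 * (w * dt / 2 * c) = (dt ^+ 2 * lm) / 4 * (c * w) by field.
have : 0 <= c * w by rewrite mulr_ge0 //; lra.
nra.
Qed.

End AcoefBounds.

Lemma Mmat_expr_e1_bound (R : realType) (th w dt lm : R) k :
  0 < th -> th <= 2 * atan (w * dt / 2) -> 0 <= lm -> 0 < dt -> 0 < w -> dt ^+ 2 * lm < 4 ->
  (1 < k)%N -> `|(Mmat th w dt lm ^+ k *m cv2 1 0) 0 0| <= contraction_rate (Acoef th w dt lm) k.-1.
Proof.
move=> th0 th_atan lm0 dt0 w0 hstab; case: k => [//|k] k1.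
rewrite Mmat_exprS_e1 ?gt_eqF //; apply: contraction_rate_ge => //.
exact: Acoef_bounds.
Qed.

(** * Independence and laws of linear combinations *)

Lemma bigcap_in_cons (T : Type) (I : eqType) (F : I -> set T) (j : I) (J : seq I) :
  \bigcap_(i in [set i | i \in j :: J]) F i =
  F j `&` \bigcap_(i in [set i | i \in J]) F i.
Proof.
apply/seteqP; split => x.
  move=> H; split; first by apply: H; rewrite /= inE eqxx.
  by move=> i /= iJ; apply: H; rewrite /= inE iJ orbT.
by move=> [Fj H] i /=; rewrite inE => /orP [/eqP ->//|iJ]; exact: H.
Qed.

Lemma eq_bigcap_in (T : Type) (I : eqType) (F G : I -> set T) (J : seq I) :
  (forall i, i \in J -> F i = G i) ->
  \bigcap_(i in [set i | i \in J]) F i = \bigcap_(i in [set i | i \in J]) G i.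
Proof. by move=> FG; apply: eq_bigcapr => i /= iJ; exact: FG. Qed.

Definition lincomb (R : pzSemiRingType) (T : Type) (I : Type) (c : I -> R)
  (Y : I -> T -> R) (J : seq I) (o : T) : R := \sum_(j <- J) c j * Y j o.

Lemma lincomb_cons (R : pzSemiRingType) (T : Type) (I : Type) (c : I -> R) (Y : I -> T -> R) j J o :
  lincomb c Y (j :: J) o = c j * Y j o + lincomb c Y J o.
Proof. by rewrite /lincomb big_cons. Qed.

Lemma measurable_fun_affine (R : realType) (a : R) :
  measurable_fun setT (fun z : R * R => a * z.1 + z.2).
Proof. by apply: measurable_funD => //; apply: measurable_funM. Qed.

Lemma measurable_lincomb (R : realType) d (T : measurableType d) (I : eqType)
  (c : I -> R) (Y : I -> T -> R) (J : seq I) :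
  (forall j, j \in J -> measurable_fun setT (Y j)) -> measurable_fun setT (lincomb c Y J).
Proof.
elim: J => [|j J IH] mY.
  by rewrite (_ : lincomb c Y [::] = cst 0) //; apply/funext => o; rewrite /lincomb big_nil.
rewrite (_ : lincomb c Y (j :: J) = fun o => c j * Y j o + lincomb c Y J o); last first.
  by apply/funext => o; exact: lincomb_cons.
apply: measurable_funD; first by apply: measurable_funM => //; apply: mY; rewrite inE eqxx.
by apply: IH => i iJ; apply: mY; rewrite inE iJ orbT.
Qed.

Section Independence.
Context (R : realType) d (Omega : measurableType d) (P : probability Omega R)
  (I : eqType) (X : I -> Omega -> R).
Hypothesis mX : forall i, measurable_fun setT (X i).
Hypothesis indep : mutually_independent P X.

Definition cylinders (J : seq I) : set (set Omega) :=
  [set E | (exists2 A : I -> set R, forall i, measurable (A i) &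
     E = \bigcap_(i in [set i | i \in J]) (X i @^-1` A i))].

Lemma measurable_cylinders J : cylinders J `<=` measurable.
Proof.
move=> _ [A mA ->]; elim: J => [|j J IH].
  by rewrite (_ : [set i | i \in [::]] = set0) ?bigcap_set0 //; apply/seteqP; split.
by rewrite bigcap_in_cons; apply: measurableI => //; rewrite -[X in measurable X]setTI; exact: mX.
Qed.

Lemma cylinders_setI_closed J : setI_closed (cylinders J).
Proof.
move=> _ _ [A1 mA1 ->] [A2 mA2 ->].
exists (fun i => A1 i `&` A2 i); first by move=> i; exact: measurableI.
by rewrite -bigcapI; apply: eq_bigcapr.
Qed.

Lemma cylinders_trace J : [set E | cylinders J E /\ E `<=` setT] = cylinders J.
Proof. by apply/seteqP; split => [E []|E ?]. Qed.

(* Both sides are finite measures in [E] that agree on the pi-system of cylinders, by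
   independence of [X i0] and the [X j], [j \in J]; Dynkin's theorem extends the equality. *)
Lemma indep_generated i0 J A0 : measurable A0 -> uniq J -> i0 \notin J ->
  forall E, <<s cylinders J>> E -> P (X i0 @^-1` A0 `&` E) = (P (X i0 @^-1` A0) * P E)%E.
Proof.
move=> mA0 uJ i0J.
have mF : measurable (X i0 @^-1` A0) by rewrite -[X in measurable X]setTI; exact: mX.
pose r : {nonneg R} := @NngNum _ (fine (P (X i0 @^-1` A0))) (fine_ge0 (measure_ge0 P _)).
have rE : (r%:num)%:E = P (X i0 @^-1` A0) by rewrite /= fineK // fin_num_measure.
have restrT : mrestr P mF setT = mscale r P setT.
  by rewrite /mrestr /mscale rE setTI -[LHS]mule1; congr (_ * _)%E; exact/esym/probability_setT.
have restr_cyl : forall E, [set E | cylinders J E /\ E `<=` setT] E ->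
    mrestr P mF E = mscale r P E.
  move=> _ [[A mA ->] _]; rewrite /mrestr /mscale rE.
  pose A' i := if i == i0 then A0 else A i.
  have mA' i : measurable (A' i) by rewrite /A'; case: ifP.
  have A'E : forall i, i \in J -> X i @^-1` A' i = X i @^-1` A i.
    by move=> i iJ; rewrite /A'; case: eqP => // ei; move: iJ i0J; rewrite ei => ->.
  have := @indep (i0 :: J) A'; rewrite /= i0J uJ => /(_ isT mA').
  rewrite bigcap_in_cons big_cons /A' eqxx (eq_bigcap_in A'E) setIC => ->.
  rewrite (indep uJ mA) big_seq [in RHS]big_seq; congr (_ * _)%E.
  by apply: eq_bigr => i iJ; rewrite A'E.
have restr_fin : (mrestr P mF setT < +oo)%E.
  by rewrite /mrestr setTI (le_lt_trans (probability_le1 _ _)) ?ltry.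
have trace_meas : [set E | cylinders J E /\ E `<=` setT] `<=` measurable.
  by rewrite cylinders_trace; exact: measurable_cylinders.
have trace_setI : setI_closed [set E | cylinders J E /\ E `<=` setT].
  by rewrite cylinders_trace; exact: cylinders_setI_closed.
move=> E; rewrite -cylinders_trace => sE; rewrite setIC -rE.
exact: (g_sigma_algebra_measure_unique_trace (cylinders J) setT measurableT trace_meas trace_setI
  _ _ restrT restr_cyl restr_fin (fun _ _ => subsetT _)).
Qed.

Lemma measurable_fun_generated j J : j \in J ->
  measurable_fun (T := g_sigma_algebraType (cylinders J)) setT (X j).
Proof.
move=> jJ _ B mB; apply: sub_sigma_algebra.
exists (fun i => if i == j then B else setT); first by move=> i; case: ifP.
rewrite setTI; apply/seteqP; split => [x Bx i iJ|x H] /=; first by case: eqP => // ->.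
by have := H j jJ; rewrite /= eqxx.
Qed.

Lemma indep_lincomb i0 J (c : I -> R) (A0 B : set R) :
  measurable A0 -> measurable B -> uniq J -> i0 \notin J ->
  P (X i0 @^-1` A0 `&` lincomb c X J @^-1` B) =
  (P (X i0 @^-1` A0) * P (lincomb c X J @^-1` B))%E.
Proof.
move=> mA0 mB uJ i0J; apply: (indep_generated mA0 uJ i0J).
have := measurable_lincomb c (fun j (jJ : j \in J) => measurable_fun_generated jJ) measurableT mB.
by rewrite setTI.
Qed.

End Independence.

Section ProductLaw.
Context (R : realType).

Lemma eq_product_measure d1 d2 (T1 : measurableType d1) (T2 : measurableType d2)
  (m1 m1' : probability T1 R) (m2 m2' : probability T2 R) :
  (forall A, measurable A -> m1 A = m1' A) -> (forall B, measurable B -> m2 B = m2' B) ->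
  forall E, measurable E -> (m1 \x m2)%E E = (m1' \x m2')%E E.
Proof.
move=> h1 h2 E mE; apply/esym/product_measure_unique => // A B mA mB.
by rewrite [LHS]product_measure1E //; congr (_ * _)%E; [exact: h1|exact: h2].
Qed.

Lemma law_pair_indep d (Omega : measurableType d) (P : probability Omega R)
  (X Y : Omega -> R) (mX : measurable_fun setT X) (mY : measurable_fun setT Y) :
  (forall A B, measurable A -> measurable B ->
     P (X @^-1` A `&` Y @^-1` B) = (P (X @^-1` A) * P (Y @^-1` B))%E) ->
  forall E, measurable E -> P ((fun o => (X o, Y o)) @^-1` E) = (law P mX \x law P mY)%E E.
Proof.
move=> XY E mE; symmetry.
exact: (product_measure_unique (m' := law P (measurable_fun_pair mX mY))).
Qed.

End ProductLaw.

Section LincombLaw.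
Context (R : realType) (I : eqType).
Context d1 (Omega1 : measurableType d1) (P1 : probability Omega1 R) (X1 : I -> Omega1 -> R).
Context d2 (Omega2 : measurableType d2) (P2 : probability Omega2 R) (X2 : I -> Omega2 -> R).
Hypotheses (mX1 : forall i, measurable_fun setT (X1 i)) (mX2 : forall i, measurable_fun setT (X2 i)).
Hypotheses (indep1 : mutually_independent P1 X1) (indep2 : mutually_independent P2 X2).

Lemma lincomb_law_eq (c : I -> R) (J : seq I) : uniq J ->
  (forall j, j \in J -> forall A, measurable A -> P1 (X1 j @^-1` A) = P2 (X2 j @^-1` A)) ->
  forall B, measurable B -> P1 (lincomb c X1 J @^-1` B) = P2 (lincomb c X2 J @^-1` B).
Proof.
elim: J => [|j J IH] uJ hlaw B mB.
  have lincomb_nil T (Y : I -> T -> R) : lincomb c Y [::] = cst 0.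
    by apply/funext => o; rewrite /lincomb big_nil.
  by rewrite !lincomb_nil !preimage_cst; case: ifP; rewrite ?probability_setT ?measure0.
move: uJ => /= /andP [jJ uJ].
have mE := measurable_fun_affine (c j) measurableT mB; rewrite setTI in mE.
have consE d (T : measurableType d) (Y : I -> T -> R) : lincomb c Y (j :: J) @^-1` B =
    (fun o => (Y j o, lincomb c Y J o)) @^-1` ((fun z : R * R => c j * z.1 + z.2) @^-1` B).
  by apply/seteqP; split => x /=; rewrite lincomb_cons.
have mS1 := measurable_lincomb c (fun i (_ : i \in J) => mX1 i).
have mS2 := measurable_lincomb c (fun i (_ : i \in J) => mX2 i).
rewrite !consE (law_pair_indep (mX1 j) mS1) ?(law_pair_indep (mX2 j) mS2) //; last 2 first.
1, 2: by move=> A B' mA mB'; exact: indep_lincomb.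
apply: eq_product_measure => // A mA; rewrite /distribution /pushforward /=.
  by apply: hlaw; rewrite ?inE ?eqxx.
by apply: IH => // i iJ; apply: hlaw; rewrite inE iJ orbT.
Qed.

End LincombLaw.

(** * The first coordinate of the chain *)

Lemma inr_pair_eq (b b' : bool) (j k : nat) :
  (inr (b, j) == inr (b', k) :> input) = (b == b') && (j == k).
Proof. by apply/eqP/andP => [[-> ->]|[/eqP -> /eqP ->]]. Qed.

Fixpoint noise_idx (k : nat) : seq input :=
  if k is k'.+1 then inr (true, k') :: inr (false, k') :: noise_idx k' else [:: inl false].

Lemma mem_noise_idx k (i : input) :
  (i \in noise_idx k) = if i is inr (_, j) then (j < k)%N else i == inl false.
Proof.
elim: k i => [|k IH] i; first by case: i => [[]|[b j]].
rewrite /= !in_cons IH.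
by case: i => [b|[[] j]] //=; rewrite !inr_pair_eq /= ?orbF ltnS [in RHS]leq_eqVlt.
Qed.

Lemma noise_idx_uniq k : uniq (noise_idx k).
Proof. by elim: k => //= k ->; rewrite !in_cons !mem_noise_idx ltnn. Qed.

Lemma rho0_notin_noise_idx k : inl true \notin noise_idx k.
Proof. by rewrite mem_noise_idx. Qed.

Lemma cv2_decomp (R : realType) (x y : R) : cv2 x y = x *: cv2 1 0 + y *: cv2 0 1.
Proof.
apply/matrixP => i j; rewrite !mxE.
by case: i => [[|[|i]] Hi] //=; rewrite ?mulr1 ?mulr0 ?addr0 ?add0r.
Qed.

Section ChainDecomposition.
Context (R : realType) (Mm Q : 'M[R]_2).

Lemma chain_decomp k : exists w : input -> 'cV[R]_2,
  forall (Omega : Type) (rho0 phi0 : Omega -> R) (xi eta : nat -> Omega -> R) o,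
  chain Mm Q rho0 phi0 xi eta k o =
  rho0 o *: (Mm ^+ k *m cv2 1 0) + \sum_(i <- noise_idx k) inputs rho0 phi0 xi eta i o *: w i.
Proof.
elim: k => [|k [w IH]].
  exists (fun _ => cv2 0 1) => Omega rho0 phi0 xi eta o /=.
  by rewrite big_seq1 expr0 mul1mx -cv2_decomp.
exists (fun i => if i == inr (true, k) then Q *m cv2 1 0
         else if i == inr (false, k) then Q *m cv2 0 1 else Mm *m w i).
move=> Omega rho0 phi0 xi eta o /=.
rewrite IH !big_cons /= !eqxx /= mulmxDr -scalemxAr mulmxA mulmxE -exprS mulmx_sumr.
rewrite (cv2_decomp (xi k o)) mulmxDr -!scalemxAr -!addrA; congr (_ + _).
rewrite addrC -addrA; congr (_ + (_ + _)).
rewrite big_seq [RHS]big_seq; apply: eq_bigr => i.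
rewrite mem_noise_idx; case: i => [b|[b j]] /= iJ; first by rewrite scalemxAr.
have jk : (j == k) = false by apply/negbTE; rewrite neq_ltn iJ.
by rewrite !inr_pair_eq jk !andbF scalemxAr.
Qed.

Lemma chain_fst_lincomb k : exists c : input -> R,
  forall (Omega : Type) (rho0 phi0 : Omega -> R) (xi eta : nat -> Omega -> R) o,
  chain Mm Q rho0 phi0 xi eta k o 0 0 =
  (Mm ^+ k *m cv2 1 0) 0 0 * rho0 o + lincomb c (inputs rho0 phi0 xi eta) (noise_idx k) o.
Proof.
have [w decomp] := chain_decomp k.
exists (fun i => w i 0 0) => Omega rho0 phi0 xi eta o; rewrite decomp mxE summxE mxE mulrC.
by congr (_ + _); apply: eq_bigr => i _; rewrite mxE mulrC.
Qed.

End ChainDecomposition.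

Definition affine_law (R : realType) (a : R) (mu L : probability R R) : set R -> \bar R :=
  pushforward (mu \x L)%E (fun z : R * R => a * z.1 + z.2).

Section ChainLaw.
Context (R : realType) (Mm Q : 'M[R]_2) (k : nat) (s0 : R).

Lemma measurable_inputs d (Omega : measurableType d) (P : probability Omega R)
  (mu : set R -> \bar R) rho0 phi0 xi eta :
  chain_setup P mu s0 rho0 phi0 xi eta ->
  forall i, measurable_fun setT (inputs rho0 phi0 xi eta i).
Proof.
by case=> [[mr _] [mp _] hxi heta _] [[]|[[] j]] //=; [exact: (hxi j).1|exact: (heta j).1].
Qed.

Lemma law_rho_affine d (Omega : measurableType d) (P : probability Omega R)
  (mu : probability R R) rho0 phi0 xi eta (c : input -> R)
  (mS : measurable_fun setT (lincomb c (inputs rho0 phi0 xi eta) (noise_idx k))) :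
  chain_setup P mu s0 rho0 phi0 xi eta ->
  (forall o, chain Mm Q rho0 phi0 xi eta k o 0 0 =
     (Mm ^+ k *m cv2 1 0) 0 0 * rho0 o + lincomb c (inputs rho0 phi0 xi eta) (noise_idx k) o) ->
  forall B, measurable B ->
  law_rho Mm Q P rho0 phi0 xi eta k B = affine_law ((Mm ^+ k *m cv2 1 0) 0 0) mu (law P mS) B.
Proof.
move=> h hc B mB; have mX := measurable_inputs h.
have [[mr hr] _ _ _ indep] := h.
have mE := measurable_fun_affine ((Mm ^+ k *m cv2 1 0) 0 0) measurableT mB.
rewrite setTI in mE.
rewrite /law_rho /affine_law /pushforward.
rewrite (_ : _ @^-1` B = (fun o => (rho0 o, lincomb c (inputs rho0 phi0 xi eta) (noise_idx k) o))
   @^-1` ((fun z : R * R => (Mm ^+ k *m cv2 1 0) 0 0 * z.1 + z.2) @^-1` B)); last first.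
  by apply/seteqP; split => o /=; rewrite hc.
rewrite (law_pair_indep mr mS) //.
  by apply: eq_product_measure => // A mA; rewrite /distribution /pushforward /= hr.
move=> A0 B0 mA0 mB0.
exact: (indep_lincomb mX indep (i0 := inl true) _ mA0 mB0 (noise_idx_uniq k) (rho0_notin_noise_idx k)).
Qed.

Lemma noise_law_eq (c : input -> R)
  d1 (Omega1 : measurableType d1) (P1 : probability Omega1 R) (mu1 : set R -> \bar R)
  rho1 phi1 xi1 eta1 (h1 : chain_setup P1 mu1 s0 rho1 phi1 xi1 eta1)
  d2 (Omega2 : measurableType d2) (P2 : probability Omega2 R) (mu2 : set R -> \bar R)
  rho2 phi2 xi2 eta2 (h2 : chain_setup P2 mu2 s0 rho2 phi2 xi2 eta2) :
  forall B, measurable B ->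
  P1 (lincomb c (inputs rho1 phi1 xi1 eta1) (noise_idx k) @^-1` B) =
  P2 (lincomb c (inputs rho2 phi2 xi2 eta2) (noise_idx k) @^-1` B).
Proof.
have [_ [_ hp1] hx1 he1 indep1] := h1; have [_ [_ hp2] hx2 he2 indep2] := h2.
apply: (lincomb_law_eq (measurable_inputs h1) (measurable_inputs h2) indep1 indep2).
  exact: noise_idx_uniq.
move=> [[]|[[] j]] /=; rewrite ?mem_noise_idx // => _ A mA.
- by rewrite hp1 // hp2.
- by rewrite (hx1 j).2 // (hx2 j).2.
- by rewrite (he1 j).2 // (he2 j).2.
Qed.

End ChainLaw.

Lemma law_rho_common_noise (R : realType) (Mm Q : 'M[R]_2) (k : nat) (s0 : R)
  (mu nu : probability R R)
  d1 (Omega1 : measurableType d1) (P1 : probability Omega1 R) rho1 phi1 xi1 eta1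
  d2 (Omega2 : measurableType d2) (P2 : probability Omega2 R) rho2 phi2 xi2 eta2 :
  chain_setup P1 mu s0 rho1 phi1 xi1 eta1 -> chain_setup P2 nu s0 rho2 phi2 xi2 eta2 ->
  exists L : probability R R, forall B, measurable B ->
    law_rho Mm Q P1 rho1 phi1 xi1 eta1 k B = affine_law ((Mm ^+ k *m cv2 1 0) 0 0) mu L B /\
    law_rho Mm Q P2 rho2 phi2 xi2 eta2 k B = affine_law ((Mm ^+ k *m cv2 1 0) 0 0) nu L B.
Proof.
move=> h1 h2; have [c hc] := chain_fst_lincomb Mm Q k.
have mS1 := measurable_lincomb c (fun i (_ : i \in noise_idx k) => measurable_inputs h1 i).
have mS2 := measurable_lincomb c (fun i (_ : i \in noise_idx k) => measurable_inputs h2 i).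
exists (law P1 mS1) => B mB; split; first exact: (law_rho_affine mS1 h1 (hc _ _ _ _ _) mB).
rewrite (law_rho_affine mS2 h2 (hc _ _ _ _ _) mB) /affine_law /pushforward.
have mE := measurable_fun_affine ((Mm ^+ k *m cv2 1 0) 0 0) measurableT mB.
rewrite setTI in mE; apply: eq_product_measure => // A mA.
by apply/esym; exact: (noise_law_eq k c h1 h2 mA).
Qed.

(** * Synchronous couplings *)

Definition transport_cost (R : realType) (pi : probability (R * R)%type R) : \bar R :=
  (\int[pi]_z ((z.1 - z.2) ^+ 2)%:E)%E.

Lemma measurable_sqr_diff (R : realType) :
  measurable_fun setT (fun z : R * R => (z.1 - z.2) ^+ 2).
Proof. exact/(measurableT_comp (exprn_measurable 2))/measurable_funB. Qed.

Section SynchronousCoupling.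
Context (R : realType) (a : R) (L mu nu : probability R R) (pi : probability (R * R)%type R).
Hypothesis hpi : coupling mu nu pi.

Lemma product_pushforward_marginal (g : R * R -> R) (m : probability R R) :
  measurable_fun setT g -> (forall A, measurable A -> pi (g @^-1` A) = m A) ->
  forall E, measurable E -> (pi \x L)%E ((fun p : (R * R) * R => (g p.1, p.2)) @^-1` E) = (m \x L)%E E.
Proof.
move=> mg hg E mE; have mgL : measurable_fun setT (fun p : (R * R) * R => (g p.1, p.2)).
  apply: measurable_fun_pair; [exact: (measurableT_comp mg measurable_fst)|exact: measurable_snd].
apply/esym; apply: (product_measure_unique (m' := distribution (pi \x L)%E (mfun_Sub (mem_set mgL)))) => //.
move=> A B mA mB; rewrite /distribution /pushforward /=.
have mgA : measurable (g @^-1` A) by rewrite -[X in measurable X]setTI; exact: mg.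
transitivity (pi (g @^-1` A) * L B)%E; first exact: product_measure1E.
by rewrite hg.
Qed.

Definition sync_map (p : (R * R) * R) : R * R := (a * p.1.1 + p.2, a * p.1.2 + p.2).

Lemma measurable_sync_map : measurable_fun setT sync_map.
Proof.
by apply: measurable_fun_pair; apply: measurable_funD => //; apply: measurable_funM => //;
  apply: measurableT_comp => //; apply: measurableT_comp.
Qed.

Definition sync_coupling := distribution (pi \x L)%E (mfun_Sub (mem_set measurable_sync_map)).

Lemma sync_coupling_coupling : coupling (affine_law a mu L) (affine_law a nu L) sync_coupling.
Proof.
move=> A mA; have mE := measurable_fun_affine a measurableT mA; rewrite setTI in mE.
split; rewrite /affine_law /pushforward.
- by rewrite -(product_pushforward_marginal (g := fst)) // => B mB; case: (hpi mB).
- by rewrite -(product_pushforward_marginal (g := snd)) // => B mB; case: (hpi mB).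
Qed.

Lemma sync_coupling_cost : transport_cost sync_coupling = ((a ^+ 2)%:E * transport_cost pi)%E.
Proof.
rewrite /transport_cost /sync_coupling /distribution ge0_integral_pushforward //; first last.
- by move=> z _; rewrite lee_fin sqr_ge0.
- by apply/measurable_EFinP; exact: measurable_sqr_diff.
rewrite preimage_setT.
transitivity (\int[pi \x L]_(p in setT) ((fun z : R * R => ((a ^+ 2) * (z.1 - z.2) ^+ 2)%:E) \o fst) p)%E.
  by apply: eq_integral => p _ /=; congr (_%:E); rewrite /sync_map /=; ring.
rewrite -[X in (\int[_]_(x in X) _)%E](preimage_setT (@fst (R * R)%type R)).
rewrite -(ge0_integral_pushforward (phi := fst)) //; last 2 first.
- by apply/measurable_EFinP; apply: measurable_funM => //; exact: measurable_sqr_diff.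
- by move=> z _; rewrite lee_fin mulr_ge0 // ?sqr_ge0.
rewrite (eq_measure_integral pi); last first.
  move=> A mA _; transitivity ((pi \x L)%E (A `*` setT)).
    by congr (_ \x _)%E; apply/seteqP; split=> z /= => [?|[]].
  by rewrite product_measure1E // -[RHS]mule1; congr (_ * _)%E; exact: probability_setT.
under eq_integral do rewrite EFinM.
rewrite ge0_integralZl // ?lee_fin ?sqr_ge0 //.
- by apply/measurable_EFinP; exact: measurable_sqr_diff.
- by move=> z _; rewrite lee_fin sqr_ge0.
Qed.

End SynchronousCoupling.

Section Wasserstein.
Context (R : realType).
Local Open Scope ereal_scope.

Lemma W2sq_ge0 (mu nu : set R -> \bar R) : 0 <= W2sq mu nu.
Proof.
by apply: le_ereal_inf_tmp => _ [pi _ <-]; apply: integral_ge0 => z _; rewrite lee_fin sqr_ge0.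
Qed.

Lemma W2sq_le_pZ (k : R) (mu nu l1 l2 : set R -> \bar R) : (0 < k)%R ->
  (forall pi, coupling mu nu pi ->
     exists2 pi', coupling l1 l2 pi' & transport_cost pi' <= k%:E * transport_cost pi) ->
  W2sq l1 l2 <= k%:E * W2sq mu nu.
Proof.
move=> k0 hcpl; rewrite -ereal_inf_pZl //; apply: le_ereal_inf_tmp => _ [_ [pi hpi <-] <-].
have [pi' hpi' le_cost] := hcpl pi hpi.
by apply: le_trans le_cost; apply: ereal_inf_lbound; exists pi'.
Qed.

Lemma W2_le_of_W2sq_le (c : R) (mu nu l1 l2 : set R -> \bar R) : (0 < c)%R ->
  W2sq l1 l2 <= (c ^+ 2)%:E * W2sq mu nu -> W2 l1 l2 <= c%:E * W2 mu nu.
Proof.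
move=> c0; rewrite /W2; have := W2sq_ge0 mu nu; have := W2sq_ge0 l1 l2.
case: (W2sq mu nu) => [r| |] //; case: (W2sq l1 l2) => [y| |] //.
- move=> _; rewrite -!EFinM !lee_fin => r0 yr.
  rewrite -(ger0_norm (ltW c0)) -sqrtr_sqr -sqrtrM ?sqr_ge0 //.
  exact: ler_wsqrtr.
- by move=> _ _ _; rewrite gt0_muley ?lte_fin // leey.
- by move=> _ _ _; rewrite gt0_muley ?lte_fin // leey.
Qed.

Lemma W2_affine_le (a c : R) (mu nu L : probability R R) (l1 l2 : set R -> \bar R) :
  (0 < c)%R -> (`|a| <= c)%R ->
  (forall B, measurable B -> l1 B = affine_law a mu L B) ->
  (forall B, measurable B -> l2 B = affine_law a nu L B) ->
  W2 l1 l2 <= c%:E * W2 mu nu.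
Proof.
move=> c0 ac hl1 hl2; apply: W2_le_of_W2sq_le => //.
apply: W2sq_le_pZ; first exact: exprn_gt0.
move=> pi hpi; exists (sync_coupling a L pi).
  by move=> A mA; rewrite hl1 // hl2 //; exact: sync_coupling_coupling.
rewrite sync_coupling_cost; apply: lee_wpmul2r.
  by apply: integral_ge0 => z _; rewrite lee_fin sqr_ge0.
rewrite lee_fin -[(a ^+ 2)%R](real_normK (num_real a)).
by apply: lerXn2r; rewrite ?nnegrE ?normr_ge0 ?(ltW c0).
Qed.

End Wasserstein.

Unset Implicit Arguments. Set Strict Implicit.

Theorem theorem3 (R : realType) (theta : R -> R)
  (htheta : forall x : R, 0 < x -> 0 < theta x <= 2 * atan (x / 2))
  (Lambda m dt : R) (n : nat) (beta omega : R)
  (hLambda : 0 <= Lambda) (hm : 0 < m) (hdt : 0 < dt)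
  (hstab : dt ^+ 2 * Lambda / m < 4) (hn : (1 <= n)%N)
  (hbeta : 0 < beta) (homega : 0 < omega)
  (Q : 'M[R]_2)
  (hQ : psd_sqrt Q (Rmat (theta (omega * dt)) omega dt (Lambda / m) beta (m / n%:R)))
  (k : nat) (hk : (1 < k)%N)
  (mu nu : probability R R)
  (d1 : measure_display) (Omega1 : measurableType d1) (P1 : probability Omega1 R)
  (rho1 phi1 : Omega1 -> R) (xi1 eta1 : nat -> Omega1 -> R)
  (h1 : chain_setup P1 mu (Num.sqrt (beta * (m / n%:R))^-1) rho1 phi1 xi1 eta1)
  (d2 : measure_display) (Omega2 : measurableType d2) (P2 : probability Omega2 R)
  (rho2 phi2 : Omega2 -> R) (xi2 eta2 : nat -> Omega2 -> R)
  (h2 : chain_setup P2 nu (Num.sqrt (beta * (m / n%:R))^-1) rho2 phi2 xi2 eta2) :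
  let vth := theta (omega * dt) in
  let A := cos vth - dt ^+ 2 * (Lambda / m) / 2 * (sin vth / (omega * dt)) in
  let Mm := Mmat vth omega dt (Lambda / m) in
  (W2 (law_rho Mm Q P1 rho1 phi1 xi1 eta1 k) (law_rho Mm Q P2 rho2 phi2 xi2 eta2 k)
   <= (if 0 < A then A ^+ k.-1 else 2^-1 * (k.-1)%:R^-1)%:E * W2 mu nu)%E.
Proof.
cbv zeta; set vth := theta (omega * dt); set Mm := Mmat vth omega dt (Lambda / m).
have /andP [th0 th_atan] := htheta _ (mulr_gt0 homega hdt).
have [L hL] := law_rho_common_noise Mm Q k h1 h2.
apply: (W2_affine_le (c := contraction_rate (Acoef vth omega dt (Lambda / m)) k.-1) (L := L)).
- by apply: contraction_rate_gt0; rewrite ltn_predRL.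
- apply: Mmat_expr_e1_bound => //; last by rewrite mulrA.
  by rewrite divr_ge0 // ltW.
- by move=> B mB; case: (hL B mB).
- by move=> B mB; case: (hL B mB).
Qed.
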